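(* For $n \ge 2$, \begin{align*} \mathbf{M}_n &= \begin{pmatrix} \frac{\Gamma \left(\frac{mn + m + n}{m + 1}\right)}{\Gamma(n) \, \Gamma \left(\frac{2m + 1}{m + 1}\right)} & 0 \\ \frac{2 \, \Gamma\left(\frac{mn + m + n}{m + 1}\right)}{\Gamma(n) \, \Gamma \left(\frac{2m + 1}{m + 1}\right)} - \frac{2(mn + n - 1) \, \Gamma \left(\frac{mn + m + n - 1}{m + 1}\right)}{m \, \Gamma(n) \, \Gamma \left(\frac{2m}{m + 1}\right)} & \frac{(mn + n - 1) \, \Gamma \left(\frac{mn + m + n - 1}{m + 1}\right)}{m \, \Gamma(n) \, \Gamma \left(\frac{2m}{m + 1}\right)} \end{pmatrix} \begin{pmatrix} W_n \\ B_n \end{pmatrix} \\ &\qquad + \begin{pmatrix} - \frac{\Gamma \left(\frac{mn + 2m + n + 1}{m + 1}\right)}{\Gamma(n) \, \Gamma \left(\frac{3m + 2}{m + 1}\right)} + 1 \\ \frac{(m + 1)(2mn + m + 2n - 1) \, \Gamma \left(\frac{mn + 2m + n}{m + 1}\right)}{m(3m + 1) \, \Gamma(n) \, \Gamma \left(\frac{2m}{m + 1}\right)} - \frac{2 \, \Gamma \left(\frac{mn + 2m + n + 1}{m + 1}\right)}{\Gamma(n) \, \Gamma \left(\frac{3m + 2}{m + 1}\right)} \end{pmatrix} \end{align*} is a martingale array (with respect to the filtration $\mathbb{F}_{n,0}$).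
   Context: A preferential dynamic attachment circuit of index $m\ge 2$ starts at time $0$ with a single node $0$. At time $n\ge1$ a new node $n$ is added and chooses $m$ parents one at a time, with replacement, from the existing nodes; at each of these $m$ steps an existing node $v$ is chosen with probability proportional to its current outdegree plus one (outdegrees are updated after each of the $m$ choices), and an edge is drawn from the chosen parent to node $n$. In the extended circuit, a node of outdegree $s$ carries $s+1$ external nodes; external nodes of nodes of outdegree $0$ are colored white and those of nodes of outdegree $1$ are colored blue. $W_n$ is the number of white external nodes (= number of nodes of outdegree $0$) and $B_n$ is the number of blue external nodes (= twice the number of nodes of outdegree $1$) after $n$ insertions. $\mathbb{F}_{n-1,0}$ is the $\sigma$-field generated by the growth of the circuit through the first $n-1$ node insertions. One has $\mathbb{E}[(W_n,B_n)^\top \mid \mathbb{F}_{n-1,0}] = \mathbf{A}_n (W_{n-1},B_{n-1})^\top + (1,0)^\top$ with $\mathbf{A}_n=\begin{pmatrix}\frac{(m+1)(n-1)}{mn+n-1} & 0\\ \frac{2m(m+1)(n-1)}{(mn+n-2)(mn+n-1)} & \frac{(m+1)(n-1)(mn-m+n-2)}{(mn+n-2)(mn+n-1)}\end{pmatrix}$. *)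

From Stdlib Require Import Reals List Arith Lia.
From Coquelicot Require Import Coquelicot.
Import ListNotations.
Open Scope R_scope.

(** Euler's Gamma function, Gamma x = \int_0^\infty t^(x-1) e^(-t) dt
    (improper Riemann integral; used only for x > 0). *)
Definition Gamma (x : R) : R :=
  RInt_gen (fun t => Rpower t (x - 1) * exp (- t))
           (at_right 0) (Rbar_locally p_infty).

(** A growth history is the list of the parent-choice steps of the node
    insertions 1, 2, ..., k (in this order); step number n (node n) is the
    list of the m parents [p_1; ...; p_m] chosen one at a time.  *)
Definition step := list nat.
Definition history := list step.

Definition count_step (v : nat) (c : step) : nat :=
  count_occ Nat.eq_dec c v.

Definition outdeg (h : history) (v : nat) : nat :=
  fold_right (fun c acc => (count_step v c + acc)%nat) 0%nat h.

Definition total_weight (deg : nat -> nat) (n : nat) : R :=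
  fold_right Rplus 0 (map (fun v => INR (deg v + 1)) (seq 0 n)).

Fixpoint step_prob (deg : nat -> nat) (n : nat) (c : step) : R :=
  match c with
  | [] => 1
  | p :: c' =>
      if Nat.ltb p n then
        INR (deg p + 1) / total_weight deg n *
        step_prob (fun v => if Nat.eqb v p then S (deg v) else deg v) n c'
      else 0
  end.

Fixpoint hist_prob_rev (m : nat) (hr : history) : R :=
  match hr with
  | [] => 1
  | c :: hr' =>
      hist_prob_rev m hr' *
      (if Nat.eqb (length c) m
       then step_prob (outdeg hr') (S (length hr')) c else 0)
  end.

Definition hist_prob (m : nat) (h : history) : R := hist_prob_rev m (rev h).

Fixpoint all_steps (m n : nat) : list step :=
  match m with
  | O => [[]]
  | S m' => flat_map (fun p => map (cons p) (all_steps m' n)) (seq 0 n)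
  end.

(** conditional expectation, given the growth history h of the first
    length h insertions, of a functional f of the history after one more
    insertion (node length h + 1). *)
Definition cond_exp (m : nat) (h : history) (f : history -> R) : R :=
  fold_right Rplus 0
    (map (fun c => step_prob (outdeg h) (S (length h)) c * f (h ++ [c]))
         (all_steps m (S (length h)))).

Definition W_of (h : history) : R :=
  INR (length (filter (fun v => Nat.eqb (outdeg h v) 0) (seq 0 (S (length h))))).
Definition B_of (h : history) : R :=
  2 * INR (length (filter (fun v => Nat.eqb (outdeg h v) 1) (seq 0 (S (length h))))).

Definition M1 (m n : nat) (h : history) : R :=
  let m := INR m in let n' := INR n in
  Gamma ((m*n' + m + n') / (m + 1)) /
    (Gamma n' * Gamma ((2*m + 1) / (m + 1))) * W_of h
  + (- Gamma ((m*n' + 2*m + n' + 1) / (m + 1)) /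
       (Gamma n' * Gamma ((3*m + 2) / (m + 1))) + 1).

Definition M2 (m n : nat) (h : history) : R :=
  let m := INR m in let n' := INR n in
  (2 * Gamma ((m*n' + m + n') / (m + 1)) /
     (Gamma n' * Gamma ((2*m + 1) / (m + 1)))
   - 2 * (m*n' + n' - 1) * Gamma ((m*n' + m + n' - 1) / (m + 1)) /
     (m * Gamma n' * Gamma (2*m / (m + 1)))) * W_of h
  + (m*n' + n' - 1) * Gamma ((m*n' + m + n' - 1) / (m + 1)) /
     (m * Gamma n' * Gamma (2*m / (m + 1))) * B_of h
  + ((m + 1) * (2*m*n' + m + 2*n' - 1) * Gamma ((m*n' + 2*m + n') / (m + 1)) /
       (m * (3*m + 1) * Gamma n' * Gamma (2*m / (m + 1)))
     - 2 * Gamma ((m*n' + 2*m + n' + 1) / (m + 1)) /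
       (Gamma n' * Gamma ((3*m + 2) / (m + 1)))).

From Stdlib Require Import Reals List Lia Lra FunctionalExtensionality Classical_Prop.
From Coquelicot Require Import Coquelicot.
Import ListNotations.
Open Scope R_scope.

(* Given the past, the insertion of node n makes m successive draws among the existing nodes, each
   proportional to outdegree + 1 and raising the picked weight by one: a Polya urn.  If Z and O
   count the nodes of outdegree 0 and 1 and T is the total weight, a draw hits the first kind with
   probability Z / T and the second with probability 2 O / T, so induction on the number of draws
   gives E[Z] and E[O] after m draws in closed form; with T = n + m (n - 1) this is exactly the
   matrix A_n (W = Z and B = 2 O).  The coefficients of M_n are quotients of
   Gamma values whose arguments at n and n - 1 differ by integers, and Gamma (y + 1) = y Gamma y
   turns the martingale identities into identities between rational functions of m and n.
   That functional equation is derived from the integral definition of Gamma: the integral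
   converges by monotonicity, and the derivative of t ^ y e ^ (- t), which vanishes at 0 and oo,
   integrates to 0. *)

(** * Monotone limits and improper integrals *)

Lemma exp_le_compat x y : x <= y -> exp x <= exp y.
Proof. intros [Hlt | ->]; [left; apply exp_increasing |]; lra. Qed.

Lemma ln_le_sub_1 z : 0 < z -> ln z <= z - 1.
Proof. intros Hz. pose proof (exp_ineq1_le (ln z)) as H. rewrite exp_ln in H; lra. Qed.

Lemma exp_mul_ln_pred y t : 0 < t -> exp ((y - 1) * ln t) = exp (y * ln t) / t.
Proof.
  intros Ht. replace ((y - 1) * ln t) with (y * ln t + - ln t) by ring.
  rewrite exp_plus, exp_Ropp, exp_ln; auto.
Qed.

Lemma filterlim_bounded_monotone {F : (R -> Prop) -> Prop} {FF : Filter F}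
    (E : R -> Prop) (g : R -> R) (x0 M : R) :
  E x0 -> (forall x, E x -> g x <= M) ->
  (forall x, E x -> F (fun z => E z /\ g x <= g z)) ->
  exists l, filterlim g F (locally l) /\ forall x, E x -> g x <= l.
Proof.
  intros Hx0 HM Hmono.
  destruct (completeness (fun r => exists x, E x /\ r = g x)) as [l [Hub Hlub]].
  { exists M. intros r [x [Hx ->]]. auto. }
  { exists (g x0), x0. auto. }
  assert (Hle : forall x, E x -> g x <= l) by (intros x Hx; apply Hub; eauto).
  exists l. split; [| exact Hle].
  intros P [eps Heps]. unfold filtermap.
  assert (Hnear : exists x, E x /\ l - eps < g x).
  { apply NNPP. intros Hno.
    assert (l <= l - eps).
    { apply Hlub. intros r [x [Hx ->]]. apply Rnot_lt_le. intros Hlt. apply Hno. eauto. }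
    destruct eps; simpl in *; lra. }
  destruct Hnear as [x [Hx Hgx]].
  apply (filter_imp (fun z => E z /\ g x <= g z)); [| auto].
  intros z [Hz Hxz]. apply Heps. specialize (Hle z Hz).
  change (Rabs (g z - l) < eps). apply Rabs_lt_between'. lra.
Qed.

Lemma is_RInt_gen_at_point_l (f : R -> R) (a : R) {Fb : (R -> Prop) -> Prop} {FFb : Filter Fb} l :
  Fb (fun b => ex_RInt f a b) -> filterlim (fun b => RInt f a b) Fb (locally l) ->
  is_RInt_gen f (at_point a) Fb l.
Proof.
  intros Hex Hlim P HP.
  exists (fun x => x = a) (fun b => ex_RInt f a b /\ P (RInt f a b)).
  - reflexivity.
  - apply filter_and; [exact Hex | exact (Hlim P HP)].
  - intros x b -> [Hb HPb]. exists (RInt f a b).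
    split; [apply (RInt_correct (V := R_CompleteNormedModule)), Hb | exact HPb].
Qed.

Lemma is_RInt_gen_at_point_r (f : R -> R) (b : R) {Fa : (R -> Prop) -> Prop} {FFa : Filter Fa} l :
  Fa (fun a => ex_RInt f a b) -> filterlim (fun a => RInt f a b) Fa (locally l) ->
  is_RInt_gen f Fa (at_point b) l.
Proof.
  intros Hex Hlim P HP.
  exists (fun a => ex_RInt f a b /\ P (RInt f a b)) (fun x => x = b).
  - apply filter_and; [exact Hex | exact (Hlim P HP)].
  - reflexivity.
  - intros a x [Ha HPa] ->. exists (RInt f a b).
    split; [apply (RInt_correct (V := R_CompleteNormedModule)), Ha | exact HPa].
Qed.

Lemma RInt_le_extend_upper (f : R -> R) a b c : a <= b <= c -> ex_RInt f a c ->
  (forall t, b < t < c -> 0 <= f t) -> RInt f a b <= RInt f a c.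
Proof.
  intros Hb Hex Hf.
  pose proof (ex_RInt_Chasles_1 f a b c Hb Hex).
  pose proof (ex_RInt_Chasles_2 f a b c Hb Hex).
  rewrite <- (RInt_Chasles f a b c) by assumption.
  assert (0 <= RInt f b c) by (apply RInt_ge_0; auto; lra).
  change (RInt f a b <= RInt f a b + RInt f b c). lra.
Qed.

Lemma RInt_le_extend_lower (f : R -> R) a b c : a <= b <= c -> ex_RInt f a c ->
  (forall t, a < t < b -> 0 <= f t) -> RInt f b c <= RInt f a c.
Proof.
  intros Hb Hex Hf.
  pose proof (ex_RInt_Chasles_1 f a b c Hb Hex).
  pose proof (ex_RInt_Chasles_2 f a b c Hb Hex).
  rewrite <- (RInt_Chasles f a b c) by assumption.
  assert (0 <= RInt f a b) by (apply RInt_ge_0; auto; lra).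
  change (RInt f b c <= RInt f a b + RInt f b c). lra.
Qed.

(** * The Gamma function *)

Definition gamma_integrand (y t : R) : R := exp ((y - 1) * ln t) * exp (- t).

Lemma Gamma_integral y :
  Gamma y = RInt_gen (gamma_integrand y) (at_right 0) (Rbar_locally p_infty).
Proof. reflexivity. Qed.

Lemma gamma_integrand_pos y t : 0 < gamma_integrand y t.
Proof. apply Rmult_lt_0_compat; apply exp_pos. Qed.

Lemma continuous_gamma_integrand y t : 0 < t -> continuous (gamma_integrand y) t.
Proof.
  intros Ht. apply (ex_derive_continuous (K := R_AbsRing) (V := R_NormedModule)).
  unfold gamma_integrand. auto_derive. lra.
Qed.

Lemma ex_RInt_gamma_integrand y a b : 0 < a -> 0 < b -> ex_RInt (gamma_integrand y) a b.
Proof.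
  intros Ha Hb. apply (ex_RInt_continuous (V := R_CompleteNormedModule)).
  intros z Hz. apply continuous_gamma_integrand.
  assert (0 < Rmin a b) by (apply Rmin_glb_lt; auto). lra.
Qed.

Lemma gamma_integrand_le_exp_half y t : 0 < y -> 1 <= t ->
  gamma_integrand y t <= exp (y * ln (2 * y)) * exp (- (t / 2)).
Proof.
  intros Hy Ht. unfold gamma_integrand. rewrite <- !exp_plus. apply exp_le_compat.
  assert (Hln_t : 0 <= ln t).
  { rewrite <- ln_1. destruct (Rle_lt_or_eq_dec 1 t Ht) as [H | <-]; [| lra].
    left. apply ln_increasing; lra. }
  assert (Hratio : ln (t / (2 * y)) <= t / (2 * y) - 1)
    by (apply ln_le_sub_1, Rdiv_lt_0_compat; lra).
  unfold Rdiv in Hratio. rewrite ln_mult, ln_Rinv in Hratio by (try apply Rinv_0_lt_compat; lra).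
  assert (y * ln t <= y * ln (2 * y) + t / 2 - y).
  { replace (t / 2) with (y * (t * / (2 * y))) by (field; lra). nra. }
  nra.
Qed.

(* On [a, 1] the factor [exp (- t)] is at most 1 and [t ^ (y - 1)] integrates to at most [1 / y]. *)
Lemma RInt_gamma_integrand_le_inv y a : 0 < y -> 0 < a <= 1 ->
  RInt (gamma_integrand y) a 1 <= / y.
Proof.
  intros Hy Ha.
  set (p := fun t => exp ((y - 1) * ln t)).
  assert (Hp : is_RInt p a 1 (minus (exp (y * ln 1) / y) (exp (y * ln a) / y))).
  { apply (is_RInt_derive (fun t => exp (y * ln t) / y)); intros x Hx;
      assert (0 < x) by (assert (0 < Rmin a 1) by (apply Rmin_glb_lt; lra); lra).
    - auto_derive; [lra |]. unfold p. rewrite exp_mul_ln_pred by lra. field. lra.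
    - apply (ex_derive_continuous (K := R_AbsRing) (V := R_NormedModule)).
      unfold p. auto_derive. lra. }
  apply Rle_trans with (RInt p a 1).
  - apply RInt_le; [lra | apply ex_RInt_gamma_integrand; lra | eexists; exact Hp |].
    intros x Hx. unfold gamma_integrand, p.
    rewrite <- (Rmult_1_r (exp ((y - 1) * ln x))) at 2.
    apply Rmult_le_compat_l; [left; apply exp_pos |].
    rewrite <- exp_0. apply exp_le_compat. lra.
  - rewrite (is_RInt_unique _ _ _ _ Hp). change (exp (y * ln 1) / y - exp (y * ln a) / y <= / y).
    rewrite ln_1, Rmult_0_r, exp_0.
    assert (0 < exp (y * ln a) / y) by (apply Rdiv_lt_0_compat; [apply exp_pos | lra]).
    unfold Rdiv in *. lra.
Qed.

Lemma RInt_gamma_integrand_le_exp y b : 0 < y -> 1 <= b ->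
  RInt (gamma_integrand y) 1 b <= 2 * exp (y * ln (2 * y)).
Proof.
  intros Hy Hb. set (C := exp (y * ln (2 * y))).
  assert (HC : 0 < C) by apply exp_pos.
  set (g := fun t => C * exp (- (t / 2))).
  assert (Hg : is_RInt g 1 b (minus (- 2 * C * exp (- (b / 2))) (- 2 * C * exp (- (1 / 2))))).
  { apply (is_RInt_derive (fun t => - 2 * C * exp (- (t / 2)))); intros x Hx.
    - auto_derive; [auto |]. unfold g.
      change (-2 * C * (- (1 * / 2) * exp (- (x * / 2))) = C * exp (- (x / 2))).
      unfold Rdiv. field.
    - apply (ex_derive_continuous (K := R_AbsRing) (V := R_NormedModule)).
      unfold g. auto_derive. auto. }
  apply Rle_trans with (RInt g 1 b).
  - apply RInt_le; [lra | apply ex_RInt_gamma_integrand; lra | eexists; exact Hg |].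
    intros x Hx. apply gamma_integrand_le_exp_half; lra.
  - rewrite (is_RInt_unique _ _ _ _ Hg).
    change (- 2 * C * exp (- (b / 2)) - - 2 * C * exp (- (1 / 2)) <= 2 * C).
    assert (exp (- (1 / 2)) <= 1) by (rewrite <- exp_0 at 2; apply exp_le_compat; lra).
    pose proof (exp_pos (- (b / 2))). nra.
Qed.

Lemma ex_Gamma_integral y : 0 < y -> exists l,
  is_RInt_gen (gamma_integrand y) (at_right 0) (Rbar_locally p_infty) l /\ 0 < l.
Proof.
  intros Hy.
  destruct (filterlim_bounded_monotone (F := at_right 0) (fun a => 0 < a <= 1)
              (fun a => RInt (gamma_integrand y) a 1) 1 (/ y)) as [l0 [Hl0 Hle0]].
  - lra.
  - intros a Ha. apply RInt_gamma_integrand_le_inv; auto.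
  - intros a Ha. exists (mkposreal a (proj1 Ha)). intros z Hz Hz0.
    change (Rabs (z - 0) < a) in Hz. rewrite Rminus_0_r, Rabs_pos_eq in Hz by lra.
    split; [lra |]. apply RInt_le_extend_lower; [lra | apply ex_RInt_gamma_integrand; lra |].
    intros t _. left. apply gamma_integrand_pos.
  - destruct (filterlim_bounded_monotone (F := Rbar_locally p_infty) (fun b => 1 <= b)
                (fun b => RInt (gamma_integrand y) 1 b) 1 (2 * exp (y * ln (2 * y))))
      as [l1 [Hl1 Hle1]].
    + lra.
    + intros b Hb. apply RInt_gamma_integrand_le_exp; auto.
    + intros b Hb. exists b. intros z Hz.
      split; [lra |]. apply RInt_le_extend_upper; [lra | apply ex_RInt_gamma_integrand; lra |].
      intros t _. left. apply gamma_integrand_pos.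
    + exists (plus l0 l1). split.
      * apply (is_RInt_gen_Chasles (V := R_NormedModule)) with 1.
        -- refine (is_RInt_gen_at_point_r _ _ _ _ Hl0).
           exists (mkposreal 1 Rlt_0_1). intros a _ Ha. apply ex_RInt_gamma_integrand; lra.
        -- refine (is_RInt_gen_at_point_l _ _ _ _ Hl1).
           exists 0. intros b Hb. apply ex_RInt_gamma_integrand; lra.
      * assert (0 < RInt (gamma_integrand y) (1 / 2) 1).
        { apply RInt_gt_0; [lra | intros; apply gamma_integrand_pos |].
          intros x Hx; apply continuous_gamma_integrand; lra. }
        specialize (Hle0 (1 / 2) ltac:(lra)). specialize (Hle1 1 ltac:(lra)).
        rewrite RInt_point in Hle1. change (0 < l0 + l1). change (0 <= l1) in Hle1. lra.
Qed.

Lemma is_RInt_gen_Gamma y : 0 < y ->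
  is_RInt_gen (gamma_integrand y) (at_right 0) (Rbar_locally p_infty) (Gamma y).
Proof.
  intros Hy. destruct (ex_Gamma_integral y Hy) as [l [Hl _]].
  rewrite Gamma_integral, (is_RInt_gen_unique _ _ Hl). exact Hl.
Qed.

Lemma Gamma_pos y : 0 < y -> 0 < Gamma y.
Proof.
  intros Hy. destruct (ex_Gamma_integral y Hy) as [l [Hl Hl0]].
  rewrite Gamma_integral, (is_RInt_gen_unique _ _ Hl). exact Hl0.
Qed.

Lemma is_derive_gamma_integrand_succ y t : 0 < t ->
  is_derive (gamma_integrand (y + 1)) t (y * gamma_integrand y t - gamma_integrand (y + 1) t).
Proof.
  intros Ht. unfold gamma_integrand. auto_derive; [lra |].
  replace (y + 1 - 1) with y by ring. rewrite exp_mul_ln_pred by lra. field. lra.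
Qed.

Lemma gamma_integrand_succ_lim_0 y : 0 < y ->
  filterlim (gamma_integrand (y + 1)) (at_right 0) (locally 0).
Proof.
  intros Hy P [eps Heps]. unfold filtermap.
  exists (mkposreal _ (exp_pos (ln eps / y))). intros t Ht Ht0.
  change (Rabs (t - 0) < exp (ln eps / y)) in Ht. rewrite Rminus_0_r, Rabs_pos_eq in Ht by lra.
  apply Heps. change (Rabs (gamma_integrand (y + 1) t - 0) < eps).
  rewrite Rminus_0_r, Rabs_pos_eq by (left; apply gamma_integrand_pos).
  unfold gamma_integrand. replace (y + 1 - 1) with y by ring.
  assert (Hln : y * ln t < ln eps).
  { apply ln_increasing in Ht; [| lra]. rewrite ln_exp in Ht.
    apply (Rmult_lt_compat_l y) in Ht; [| lra]. field_simplify in Ht; lra. }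
  apply exp_increasing in Hln. rewrite exp_ln in Hln by (destruct eps; auto).
  assert (exp (- t) < 1) by (rewrite <- exp_0; apply exp_increasing; lra).
  pose proof (exp_pos (y * ln t)). pose proof (exp_pos (- t)). nra.
Qed.

Lemma gamma_integrand_succ_lim_p_infty y : 0 < y ->
  filterlim (gamma_integrand (y + 1)) (Rbar_locally p_infty) (locally 0).
Proof.
  intros Hy P [eps Heps]. unfold filtermap.
  set (C := exp ((y + 1) * ln (2 * (y + 1)))).
  assert (HC : 0 < C) by apply exp_pos.
  assert (Heps_C : 0 < eps / C) by (destruct eps; simpl; apply Rdiv_lt_0_compat; auto).
  exists (Rmax 1 (- 2 * ln (eps / C))). intros t Ht.
  pose proof (Rle_lt_trans _ _ _ (Rmax_l _ _) Ht). pose proof (Rle_lt_trans _ _ _ (Rmax_r _ _) Ht).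
  apply Heps. change (Rabs (gamma_integrand (y + 1) t - 0) < eps).
  rewrite Rminus_0_r, Rabs_pos_eq by (left; apply gamma_integrand_pos).
  eapply Rle_lt_trans; [apply gamma_integrand_le_exp_half; lra |]. fold C.
  assert (Hexp : exp (- (t / 2)) < eps / C).
  { rewrite <- (exp_ln (eps / C)) by exact Heps_C. apply exp_increasing. lra. }
  apply (Rmult_lt_compat_l C) in Hexp; [| exact HC].
  replace (C * (eps / C)) with (pos eps) in Hexp by (field; lra). exact Hexp.
Qed.

Lemma between_pos_eventually :
  filter_prod (at_right 0) (Rbar_locally p_infty)
    (fun ab => forall x, Rmin (fst ab) (snd ab) <= x <= Rmax (fst ab) (snd ab) -> 0 < x).
Proof.
  exists (fun a => 0 < a) (fun b => 0 < b).
  - exists (mkposreal 1 Rlt_0_1). auto.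
  - exists 0. auto.
  - intros a b Ha Hb x Hx. assert (0 < Rmin a b) by (apply Rmin_glb_lt; auto). simpl in Hx. lra.
Qed.

(* [t ^ y e ^ (- t)] vanishes at both ends of (0, oo). *)
Lemma is_RInt_gen_gamma_integrand_succ_derivative y : 0 < y ->
  is_RInt_gen (fun t => y * gamma_integrand y t - gamma_integrand (y + 1) t)
    (at_right 0) (Rbar_locally p_infty) 0.
Proof.
  intros Hy.
  set (g := gamma_integrand (y + 1)).
  set (dg := fun t => y * gamma_integrand y t - g t).
  assert (Hdg : forall x, 0 < x -> Derive g x = dg x)
    by (intros x Hx; apply is_derive_unique, is_derive_gamma_integrand_succ; lra).
  assert (Hcont : forall x, 0 < x -> continuous (Derive g) x).
  { intros x Hx. apply (continuous_ext_loc _ dg).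
    - exists (mkposreal x Hx). intros z Hz. change (Rabs (z - x) < x) in Hz.
      apply Rabs_lt_between' in Hz. rewrite Hdg; [reflexivity | lra].
    - apply (ex_derive_continuous (K := R_AbsRing) (V := R_NormedModule)).
      unfold dg, g, gamma_integrand. auto_derive. lra. }
  assert (Hftc : is_RInt_gen (Derive g) (at_right 0) (Rbar_locally p_infty) (0 - 0)).
  { apply is_RInt_gen_Derive.
    - apply (filter_imp _ _ (fun ab H x Hx =>
               ex_intro _ _ (is_derive_gamma_integrand_succ y x (H x Hx))) between_pos_eventually).
    - apply (filter_imp _ _ (fun ab H x Hx => Hcont x (H x Hx)) between_pos_eventually).
    - apply gamma_integrand_succ_lim_0; exact Hy.
    - apply gamma_integrand_succ_lim_p_infty; exact Hy. }
  rewrite Rminus_0_r in Hftc.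
  apply (is_RInt_gen_ext (Derive g)); [| exact Hftc].
  apply (filter_imp _ _ (fun ab H x Hx =>
           Hdg x (H x (conj (Rlt_le _ _ (proj1 Hx)) (Rlt_le _ _ (proj2 Hx)))))
           between_pos_eventually).
Qed.

Lemma Gamma_succ y : 0 < y -> Gamma (y + 1) = y * Gamma y.
Proof.
  intros Hy.
  assert (Hsucc := is_RInt_gen_minus _ _ _ _
                     (is_RInt_gen_scal _ y _ (is_RInt_gen_Gamma y Hy))
                     (is_RInt_gen_gamma_integrand_succ_derivative y Hy)).
  rewrite Gamma_integral, (is_RInt_gen_unique _ (minus (scal y (Gamma y)) 0)).
  - change (y * Gamma y - 0 = y * Gamma y). ring.
  - refine (is_RInt_gen_ext _ _ _ _ Hsucc).
    apply filter_forall. intros ab x _.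
    change (y * gamma_integrand y x - (y * gamma_integrand y x - gamma_integrand (y + 1) x)
            = gamma_integrand (y + 1) x).
    ring.
Qed.

(** * Polya-urn dynamics of the parent choices *)

Definition sumR (l : list nat) (f : nat -> R) : R := fold_right Rplus 0 (map f l).

Lemma sumR_app l1 l2 f : sumR (l1 ++ l2) f = sumR l1 f + sumR l2 f.
Proof.
  unfold sumR. rewrite map_app, fold_right_app.
  induction l1 as [| x l1 IH]; simpl; [ring |]. rewrite IH. ring.
Qed.

Lemma sumR_ext_in l f g : (forall x, In x l -> f x = g x) -> sumR l f = sumR l g.
Proof. intros H. unfold sumR. f_equal. apply map_ext_in. exact H. Qed.

Lemma sumR_plus l f g : sumR l (fun x => f x + g x) = sumR l f + sumR l g.
Proof. unfold sumR. induction l; simpl; [ring |]. rewrite IHl. ring. Qed.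

Lemma sumR_scal l a f : sumR l (fun x => a * f x) = a * sumR l f.
Proof. unfold sumR. induction l; simpl; [ring |]. rewrite IHl. ring. Qed.

Lemma sumR_const l a : sumR l (fun _ => a) = INR (length l) * a.
Proof.
  unfold sumR. induction l as [| x l IH]; [simpl; ring |].
  change (a + fold_right Rplus 0 (map (fun _ => a) l) = INR (S (length l)) * a).
  rewrite IH, S_INR. ring.
Qed.

Lemma sumR_seq_S n f : sumR (seq 0 (S n)) f = sumR (seq 0 n) f + f n.
Proof. rewrite seq_S, sumR_app. unfold sumR at 2. simpl. ring. Qed.

Lemma sumR_pos n f : (0 < n)%nat -> (forall v, 0 < f v) -> 0 < sumR (seq 0 n) f.
Proof.
  intros Hn Hf. induction n as [| n IH]; [lia |]. rewrite sumR_seq_S.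
  destruct n; [unfold sumR; simpl; specialize (Hf 0%nat); lra |].
  specialize (IH ltac:(lia)). specialize (Hf (S n)). lra.
Qed.

Definition indic (b : bool) : R := if b then 1 else 0.

Lemma sumR_indic_eqb n p a : (p < n)%nat ->
  sumR (seq 0 n) (fun v => a * indic (v =? p)%nat) = a.
Proof.
  induction n as [| n IH]; intros Hp; [lia |]. rewrite sumR_seq_S.
  destruct (Nat.eq_dec p n) as [-> | Hne].
  - rewrite Nat.eqb_refl, (sumR_ext_in _ _ (fun _ => 0)), sumR_const; [simpl; ring |].
    intros x Hx. apply in_seq in Hx. destruct (Nat.eqb_spec x n); [lia | simpl; ring].
  - rewrite IH by lia. destruct (Nat.eqb_spec n p); [lia | simpl; ring].
Qed.

Lemma length_filter_sumR (f : nat -> bool) l :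
  INR (length (filter f l)) = sumR l (fun v => indic (f v)).
Proof.
  induction l as [| a l IH]; [reflexivity |]. unfold sumR in *. cbn [filter map fold_right].
  destruct (f a); cbn [length indic]; rewrite <- IH; [rewrite S_INR |]; ring.
Qed.

Definition incr (p : nat) (d : nat -> nat) : nat -> nat :=
  fun v => if (v =? p)%nat then S (d v) else d v.

Definition add_step (c : step) (d : nat -> nat) : nat -> nat :=
  fun v => (d v + count_step v c)%nat.

Definition zeros (n : nat) (d : nat -> nat) : R := sumR (seq 0 n) (fun v => indic (d v =? 0)%nat).
Definition ones (n : nat) (d : nat -> nat) : R := sumR (seq 0 n) (fun v => indic (d v =? 1)%nat).

Definition pick_prob (d : nat -> nat) (n p : nat) : R := INR (d p + 1) / total_weight d n.

Definition mean_after (k n : nat) (d : nat -> nat) (F : (nat -> nat) -> R) : R :=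
  fold_right Rplus 0 (map (fun c => step_prob d n c * F (add_step c d)) (all_steps k n)).

Lemma total_weight_sumR d n : total_weight d n = sumR (seq 0 n) (fun v => INR (d v + 1)).
Proof. reflexivity. Qed.

Lemma total_weight_pos d n : (0 < n)%nat -> 0 < total_weight d n.
Proof. intros Hn. apply sumR_pos; [exact Hn |]. intros v. apply lt_0_INR. lia. Qed.

Lemma total_weight_incr d n p : (p < n)%nat -> total_weight (incr p d) n = total_weight d n + 1.
Proof.
  intros Hp. rewrite !total_weight_sumR, <- (sumR_indic_eqb n p 1 Hp), <- sumR_plus.
  apply sumR_ext_in. intros v _. unfold incr, indic.
  destruct (v =? p)%nat; [rewrite !plus_INR, S_INR |]; ring.
Qed.

Lemma zeros_incr d n p : (p < n)%nat ->
  zeros n (incr p d) = zeros n d - indic (d p =? 0)%nat.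
Proof.
  intros Hp.
  enough (zeros n (incr p d) + indic (d p =? 0)%nat = zeros n d) by lra.
  unfold zeros. rewrite <- (sumR_indic_eqb n p (indic (d p =? 0)%nat) Hp), <- sumR_plus.
  apply sumR_ext_in. intros v _. unfold incr.
  destruct (Nat.eqb_spec v p) as [-> |]; simpl; [destruct (d p =? 0)%nat |]; simpl; ring.
Qed.

Lemma ones_incr d n p : (p < n)%nat ->
  ones n (incr p d) = ones n d + indic (d p =? 0)%nat - indic (d p =? 1)%nat.
Proof.
  intros Hp.
  enough (ones n (incr p d) + indic (d p =? 1)%nat = ones n d + indic (d p =? 0)%nat) by lra.
  unfold ones.
  rewrite <- (sumR_indic_eqb n p (indic (d p =? 1)%nat) Hp),
          <- (sumR_indic_eqb n p (indic (d p =? 0)%nat) Hp), <- !sumR_plus.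
  apply sumR_ext_in. intros v _. unfold incr.
  destruct (Nat.eqb_spec v p) as [-> |]; simpl; [destruct (d p) as [| [| k]] |]; simpl; ring.
Qed.

Lemma sumR_pick_prob d n : (0 < n)%nat -> sumR (seq 0 n) (pick_prob d n) = 1.
Proof.
  intros Hn. pose proof (total_weight_pos d n Hn).
  unfold pick_prob, Rdiv. rewrite (sumR_ext_in _ _ (fun p => / total_weight d n * INR (d p + 1)))
    by (intros; ring).
  rewrite sumR_scal, <- total_weight_sumR. field. lra.
Qed.

Lemma sumR_pick_prob_indic d n k :
  sumR (seq 0 n) (fun p => pick_prob d n p * indic (d p =? k)%nat)
  = INR (k + 1) * sumR (seq 0 n) (fun v => indic (d v =? k)%nat) / total_weight d n.
Proof.
  unfold Rdiv. rewrite Rmult_assoc, (Rmult_comm _ (/ _)), <- Rmult_assoc, <- sumR_scal.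
  apply sumR_ext_in. intros p _. unfold pick_prob.
  destruct (Nat.eqb_spec (d p) k) as [-> |]; simpl; unfold Rdiv; ring.
Qed.

Lemma one_draw_mean d n a b : (0 < n)%nat ->
  sumR (seq 0 n) (fun p => pick_prob d n p * (a * zeros n (incr p d) + b * ones n (incr p d)))
  = a * (zeros n d - zeros n d / total_weight d n)
    + b * (ones n d + zeros n d / total_weight d n - 2 * ones n d / total_weight d n).
Proof.
  intros Hn.
  rewrite (sumR_ext_in _ _ (fun p => (a * zeros n d + b * ones n d) * pick_prob d n p
     + ((b - a) * (pick_prob d n p * indic (d p =? 0)%nat)
        + (- b) * (pick_prob d n p * indic (d p =? 1)%nat)))).
  - rewrite !sumR_plus, !sumR_scal, sumR_pick_prob, !sumR_pick_prob_indic by exact Hn.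
    fold (zeros n d) (ones n d). simpl (INR (0 + 1)). simpl (INR (1 + 1)). field.
    apply Rgt_not_eq, total_weight_pos, Hn.
  - intros p Hp. apply in_seq in Hp. rewrite zeros_incr, ones_incr by lia. ring.
Qed.

Lemma add_step_nil d : add_step [] d = d.
Proof. apply functional_extensionality. intros v. unfold add_step, count_step. simpl. lia. Qed.

Lemma add_step_cons p c d : add_step (p :: c) d = add_step c (incr p d).
Proof.
  apply functional_extensionality. intros v. unfold add_step, incr, count_step. simpl.
  destruct (Nat.eq_dec p v); destruct (Nat.eqb_spec v p); lia.
Qed.

Lemma fold_right_Rplus_map_scal {A} (l : list A) a (g : A -> R) :
  fold_right Rplus 0 (map (fun x => a * g x) l) = a * fold_right Rplus 0 (map g l).
Proof. induction l as [| x l IH]; simpl; [ring |]. rewrite IH. ring. Qed.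

Lemma fold_right_Rplus_map_flat_map {A} (g : A -> R) (f : nat -> list A) l :
  fold_right Rplus 0 (map g (flat_map f l)) = sumR l (fun p => fold_right Rplus 0 (map g (f p))).
Proof.
  induction l as [| p l IH]; simpl; [reflexivity |]. rewrite map_app, fold_right_app.
  unfold sumR in *; simpl. rewrite <- IH.
  generalize (fold_right Rplus 0 (map g (flat_map f l))). intros r.
  induction (map g (f p)) as [| x gs IHgs]; simpl; [ring |]. rewrite IHgs. ring.
Qed.

Lemma mean_after_O n d F : mean_after 0 n d F = F d.
Proof. unfold mean_after. simpl. rewrite add_step_nil. ring. Qed.

Lemma mean_after_S k n d F :
  mean_after (S k) n d F = sumR (seq 0 n) (fun p => pick_prob d n p * mean_after k n (incr p d) F).
Proof.
  unfold mean_after. simpl. rewrite fold_right_Rplus_map_flat_map. apply sumR_ext_in.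
  intros p Hp. apply in_seq in Hp. rewrite map_map, <- fold_right_Rplus_map_scal.
  f_equal. apply map_ext. intros c. simpl.
  replace (p <? n)%nat with true by (symmetry; apply Nat.ltb_lt; lia).
  rewrite add_step_cons. unfold pick_prob, incr. ring.
Qed.

Lemma mean_after_linear k n d a b F G :
  mean_after k n d (fun d' => a * F d' + b * G d')
  = a * mean_after k n d F + b * mean_after k n d G.
Proof.
  unfold mean_after. induction (all_steps k n) as [| c l IH]; simpl; [ring |]. rewrite IH. ring.
Qed.

Lemma mean_after_const k n d a : (0 < n)%nat -> mean_after k n d (fun _ => a) = a.
Proof.
  intros Hn. revert d. induction k as [| k IH]; intros d; [apply mean_after_O |].
  rewrite mean_after_S, (sumR_ext_in _ _ (fun p => a * pick_prob d n p))
    by (intros; rewrite IH; ring).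
  rewrite sumR_scal, sumR_pick_prob by exact Hn. ring.
Qed.

(* Each draw removes a node of outdegree 0 with probability [Z / T] and raises [T] by one, so [Z]
   is multiplied on average by [(T - 1) / T], then [T / (T + 1)], ...: the product telescopes. *)
Lemma mean_after_zeros k n d : (0 < n)%nat -> 2 < total_weight d n ->
  mean_after k n d (zeros n)
  = zeros n d * (total_weight d n - 1) / (total_weight d n + INR k - 1).
Proof.
  intros Hn. revert d. induction k as [| k IH]; intros d HT.
  - rewrite mean_after_O. simpl. field. lra.
  - pose proof (pos_INR k). rewrite mean_after_S.
    rewrite (sumR_ext_in _ _ (fun p => pick_prob d n p *
       ((total_weight d n / (total_weight d n + INR k)) * zeros n (incr p d)
        + 0 * ones n (incr p d)))).
    + rewrite one_draw_mean, S_INR by exact Hn. field. lra.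
    + intros p Hp. apply in_seq in Hp. rewrite IH; rewrite total_weight_incr by lia; [| lra].
      field. lra.
Qed.

Lemma mean_after_ones k n d : (0 < n)%nat -> 2 < total_weight d n ->
  mean_after k n d (ones n)
  = (INR k * (total_weight d n - 1) * zeros n d
     + (total_weight d n - 1) * (total_weight d n - 2) * ones n d)
    / ((total_weight d n + INR k - 2) * (total_weight d n + INR k - 1)).
Proof.
  intros Hn. revert d. induction k as [| k IH]; intros d HT.
  - rewrite mean_after_O. simpl. field. lra.
  - pose proof (pos_INR k). rewrite mean_after_S.
    set (T := total_weight d n).
    rewrite (sumR_ext_in _ _ (fun p => pick_prob d n p *
       ((INR k * T / ((T + INR k - 1) * (T + INR k))) * zeros n (incr p d)
        + (T * (T - 1) / ((T + INR k - 1) * (T + INR k))) * ones n (incr p d)))).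
    + rewrite one_draw_mean, S_INR by exact Hn. fold T. field. unfold T. lra.
    + intros p Hp. apply in_seq in Hp. rewrite IH; rewrite total_weight_incr by lia; [| lra].
      fold T. field. unfold T. lra.
Qed.

(** * Histories of positive probability *)

Lemma step_prob_neq_0_lt d n c : step_prob d n c <> 0 -> forall p, In p c -> (p < n)%nat.
Proof.
  revert d. induction c as [| q c IH]; intros d H p Hp; [destruct Hp |].
  simpl in H. destruct (Nat.ltb_spec q n) as [Hq | Hq]; [| lra].
  destruct Hp as [-> | Hp]; [exact Hq |].
  apply (IH (incr q d)); [| exact Hp]. intros E. apply H. unfold incr in E. rewrite E. ring.
Qed.

Lemma hist_prob_rev_neq_0 m (hr : history) : hist_prob_rev m hr <> 0 ->
  forall c, In c hr -> length c = m /\ forall p, In p c -> (p < length hr)%nat.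
Proof.
  induction hr as [| c0 hr IH]; intros H c Hc; [destruct Hc |].
  simpl in H. destruct (Nat.eqb_spec (length c0) m) as [Hl | Hl]; [| exfalso; apply H; ring].
  assert (H1 : hist_prob_rev m hr <> 0) by (intros E; apply H; rewrite E; ring).
  assert (H2 : step_prob (outdeg hr) (S (length hr)) c0 <> 0)
    by (intros E; apply H; rewrite E; ring).
  simpl length. destruct Hc as [<- | Hc].
  - split; [exact Hl |]. exact (step_prob_neq_0_lt _ _ _ H2).
  - destruct (IH H1 c Hc) as [Hlen Hlt]. split; [exact Hlen |].
    intros p Hp. specialize (Hlt p Hp). lia.
Qed.

Lemma hist_prob_pos_steps m (h : history) : 0 < hist_prob m h ->
  forall c, In c h -> length c = m /\ forall p, In p c -> (p < length h)%nat.
Proof.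
  intros Hpos c Hc.
  pose proof (hist_prob_rev_neq_0 m (rev h) (Rgt_not_eq _ _ Hpos) c (proj1 (in_rev h c) Hc)) as H.
  rewrite length_rev in H. exact H.
Qed.

Lemma all_steps_lt k n (c : step) : In c (all_steps k n) -> forall p, In p c -> (p < n)%nat.
Proof.
  revert c. induction k as [| k IH]; intros c Hc p Hp.
  - destruct Hc as [<- | []]. destruct Hp.
  - apply in_flat_map in Hc. destruct Hc as [q [Hq Hc]].
    apply in_map_iff in Hc. destruct Hc as [c' [<- Hc']].
    destruct Hp as [-> | Hp]; [apply in_seq in Hq; lia | exact (IH c' Hc' p Hp)].
Qed.

Lemma outdeg_app_step h c : outdeg (h ++ [c]) = add_step c (outdeg h).
Proof.
  apply functional_extensionality. intros v. unfold add_step.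
  induction h as [| c0 h IH]; [simpl; lia |]. unfold outdeg in *. simpl. rewrite IH. lia.
Qed.

Lemma count_step_lt v (c : step) : (forall p, In p c -> (p < v)%nat) -> count_step v c = 0%nat.
Proof.
  intros H. apply count_occ_not_In. intros Hv. specialize (H v Hv). lia.
Qed.

Lemma outdeg_lt (h : history) v :
  (forall c, In c h -> forall p, In p c -> (p < v)%nat) -> outdeg h v = 0%nat.
Proof.
  induction h as [| c h IH]; intros H; [reflexivity |]. unfold outdeg in *. simpl.
  rewrite IH, count_step_lt by (intros; eapply H; simpl; eauto). reflexivity.
Qed.

Lemma sumR_count_step n (c : step) : (forall p, In p c -> (p < n)%nat) ->
  sumR (seq 0 n) (fun v => INR (count_step v c)) = INR (length c).
Proof.
  induction c as [| q c IH]; intros H.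
  - rewrite (sumR_ext_in _ _ (fun _ => 0)), sumR_const by reflexivity. simpl. ring.
  - rewrite (sumR_ext_in _ _ (fun v => INR (count_step v c) + 1 * indic (v =? q)%nat)).
    + rewrite sumR_plus, sumR_indic_eqb, IH by (intros; apply H; simpl; auto).
      simpl length. rewrite S_INR. ring.
    + intros v _. unfold count_step. simpl.
      destruct (Nat.eq_dec q v); destruct (Nat.eqb_spec v q); try lia;
        rewrite ?S_INR; cbv [indic]; ring.
Qed.

Lemma total_weight_outdeg m n (h : history) :
  (forall c, In c h -> length c = m /\ forall p, In p c -> (p < n)%nat) ->
  total_weight (outdeg h) n = INR n + INR m * INR (length h).
Proof.
  induction h as [| c h IH]; intros H.
  - rewrite total_weight_sumR, (sumR_ext_in _ _ (fun _ => 1)), sumR_const, length_seq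
      by reflexivity. simpl. ring.
  - destruct (H c (or_introl eq_refl)) as [Hlen Hlt].
    rewrite total_weight_sumR,
      (sumR_ext_in _ _ (fun v => INR (count_step v c) + INR (outdeg h v + 1))).
    + rewrite sumR_plus, <- total_weight_sumR, IH, (sumR_count_step n c Hlt), Hlen
        by (intros c' Hc'; apply H; right; exact Hc').
      change (length (c :: h)) with (S (length h)). rewrite S_INR. ring.
    + intros v _. rewrite <- plus_INR. f_equal. unfold outdeg. simpl. lia.
Qed.

(** * The martingale *)

Lemma Gamma_succ_at a y : 0 < y -> a = y + 1 -> Gamma a = y * Gamma y.
Proof. intros Hy ->. exact (Gamma_succ y Hy). Qed.

Lemma Gamma_succ_succ_at a y : 0 < y -> a = y + 2 -> Gamma a = (y + 1) * y * Gamma y.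
Proof.
  intros Hy ->. replace (y + 2) with (y + 1 + 1) by ring.
  rewrite !Gamma_succ by lra. ring.
Qed.

Definition A11 (m x : R) : R := (m + 1) * (x - 1) / (m * x + x - 1).
Definition A21 (m x : R) : R := 2 * m * (m + 1) * (x - 1) / ((m * x + x - 2) * (m * x + x - 1)).
Definition A22 (m x : R) : R :=
  (m + 1) * (x - 1) * (m * x - m + x - 2) / ((m * x + x - 2) * (m * x + x - 1)).

Definition coef11 (m x : R) : R :=
  Gamma ((m*x + m + x) / (m + 1)) / (Gamma x * Gamma ((2*m + 1) / (m + 1))).
Definition shift1 (m x : R) : R :=
  - Gamma ((m*x + 2*m + x + 1) / (m + 1)) / (Gamma x * Gamma ((3*m + 2) / (m + 1))) + 1.
Definition coef22 (m x : R) : R :=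
  (m*x + x - 1) * Gamma ((m*x + m + x - 1) / (m + 1)) / (m * Gamma x * Gamma (2*m / (m + 1))).
Definition coef21 (m x : R) : R :=
  2 * Gamma ((m*x + m + x) / (m + 1)) / (Gamma x * Gamma ((2*m + 1) / (m + 1)))
  - 2 * (m*x + x - 1) * Gamma ((m*x + m + x - 1) / (m + 1)) / (m * Gamma x * Gamma (2*m / (m + 1))).
Definition shift2 (m x : R) : R :=
  (m + 1) * (2*m*x + m + 2*x - 1) * Gamma ((m*x + 2*m + x) / (m + 1)) /
    (m * (3*m + 1) * Gamma x * Gamma (2*m / (m + 1)))
  - 2 * Gamma ((m*x + 2*m + x + 1) / (m + 1)) / (Gamma x * Gamma ((3*m + 2) / (m + 1))).

(* [u] and [v] are the Gamma arguments of [coef11] and [coef22] at [x - 1]; at [x] they are one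
   higher, and the arguments in the shift terms are two higher. *)
Lemma martingale_coefficients_M1 m x : 0 < m -> 1 < x ->
  coef11 m x * A11 m x = coef11 m (x - 1) /\ coef11 m x + shift1 m x = shift1 m (x - 1).
Proof.
  intros Hm Hx. unfold coef11, shift1, A11.
  set (u := (m * (x - 1) + m + (x - 1)) / (m + 1)).
  assert (Hu : 0 < u) by (unfold u; apply Rdiv_lt_0_compat; nra).
  rewrite (Gamma_succ_at ((m * x + m + x) / (m + 1)) u) by (auto; unfold u; field; lra).
  rewrite (Gamma_succ_succ_at ((m * x + 2 * m + x + 1) / (m + 1)) u)
    by (auto; unfold u; field; lra).
  replace ((m * (x - 1) + 2 * m + (x - 1) + 1) / (m + 1)) with (u + 1) by (unfold u; field; lra).
  rewrite (Gamma_succ u Hu), (Gamma_succ_at x (x - 1)) by lra.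
  assert (H1 : 0 < (2 * m + 1) / (m + 1)) by (apply Rdiv_lt_0_compat; lra).
  rewrite (Gamma_succ_at ((3 * m + 2) / (m + 1)) ((2 * m + 1) / (m + 1))) by (auto; field; lra).
  pose proof (Gamma_pos u Hu). pose proof (Gamma_pos (x - 1) ltac:(lra)).
  pose proof (Gamma_pos _ H1).
  unfold u in *. split; field; repeat split; nra.
Qed.

Lemma martingale_coefficients_M2 m x : 1 <= m -> 1 < x ->
  coef21 m x * A11 m x + coef22 m x * A21 m x = coef21 m (x - 1)
  /\ coef22 m x * A22 m x = coef22 m (x - 1)
  /\ coef21 m x + shift2 m x = shift2 m (x - 1).
Proof.
  intros Hm Hx. unfold coef21, coef22, shift2, A11, A21, A22.
  set (u := (m * (x - 1) + m + (x - 1)) / (m + 1)).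
  assert (Hu : 0 < u) by (unfold u; apply Rdiv_lt_0_compat; nra).
  set (v := (m * (x - 1) + m + (x - 1) - 1) / (m + 1)).
  assert (Hv : 0 < v) by (unfold v; apply Rdiv_lt_0_compat; nra).
  rewrite (Gamma_succ_at ((m * x + m + x) / (m + 1)) u) by (auto; unfold u; field; lra).
  rewrite (Gamma_succ_succ_at ((m * x + 2 * m + x + 1) / (m + 1)) u)
    by (auto; unfold u; field; lra).
  replace ((m * (x - 1) + 2 * m + (x - 1) + 1) / (m + 1)) with (u + 1) by (unfold u; field; lra).
  rewrite (Gamma_succ_at ((m * x + m + x - 1) / (m + 1)) v) by (auto; unfold v; field; lra).
  rewrite (Gamma_succ_succ_at ((m * x + 2 * m + x) / (m + 1)) v) by (auto; unfold v; field; lra).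
  replace ((m * (x - 1) + 2 * m + (x - 1)) / (m + 1)) with (v + 1) by (unfold v; field; lra).
  rewrite (Gamma_succ u Hu), (Gamma_succ v Hv), (Gamma_succ_at x (x - 1)) by lra.
  assert (H1 : 0 < (2 * m + 1) / (m + 1)) by (apply Rdiv_lt_0_compat; lra).
  assert (H2 : 0 < 2 * m / (m + 1)) by (apply Rdiv_lt_0_compat; lra).
  rewrite (Gamma_succ_at ((3 * m + 2) / (m + 1)) ((2 * m + 1) / (m + 1))) by (auto; field; lra).
  pose proof (Gamma_pos u Hu). pose proof (Gamma_pos v Hv).
  pose proof (Gamma_pos (x - 1) ltac:(lra)).
  pose proof (Gamma_pos _ H1). pose proof (Gamma_pos _ H2).
  unfold u, v in *. split; [| split]; field; repeat split; nra.
Qed.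

Lemma M1_eq m n h : M1 m n h = coef11 (INR m) (INR n) * W_of h + shift1 (INR m) (INR n).
Proof. reflexivity. Qed.

Lemma M2_eq m n h : M2 m n h =
  coef21 (INR m) (INR n) * W_of h + coef22 (INR m) (INR n) * B_of h + shift2 (INR m) (INR n).
Proof. reflexivity. Qed.

Lemma W_of_zeros h : W_of h = zeros (S (length h)) (outdeg h).
Proof. unfold W_of. rewrite length_filter_sumR. reflexivity. Qed.

Lemma B_of_ones h : B_of h = 2 * ones (S (length h)) (outdeg h).
Proof. unfold B_of. rewrite length_filter_sumR. reflexivity. Qed.

Lemma cond_exp_affine m h a b e f g :
  cond_exp m h (fun h' => a * f h' + b * g h' + e)
  = a * cond_exp m h f + b * cond_exp m h g + e.
Proof.
  assert (Htotal : cond_exp m h (fun _ => 1) = 1)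
    by exact (mean_after_const m (S (length h)) (outdeg h) 1 (Nat.lt_0_succ _)).
  transitivity (a * cond_exp m h f + b * cond_exp m h g + e * cond_exp m h (fun _ => 1));
    [| rewrite Htotal; ring].
  unfold cond_exp. induction (all_steps m (S (length h))) as [| c l IH]; simpl; [ring |].
  rewrite IH. ring.
Qed.

Lemma cond_exp_mean_after m h a e F G :
  (forall c, In c (all_steps m (S (length h))) ->
     F (h ++ [c]) = a * G (add_step c (outdeg h)) + e) ->
  cond_exp m h F = a * mean_after m (S (length h)) (outdeg h) G + e.
Proof.
  intros HFG.
  transitivity (mean_after m (S (length h)) (outdeg h) (fun d => a * G d + e * (fun _ => 1) d)).
  - unfold cond_exp, mean_after. f_equal. apply map_ext_in. intros c Hc. rewrite HFG by exact Hc.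
    ring.
  - rewrite mean_after_linear, mean_after_const by lia. ring.
Qed.

Section OneInsertion.

Variables (m : nat) (h : history).
Hypothesis Hm : (1 <= m)%nat.
Hypothesis Hh : (1 <= length h)%nat.
Hypothesis Hpos : 0 < hist_prob m h.

Let n := S (length h).

Lemma add_step_new_node c : In c (all_steps m n) -> add_step c (outdeg h) n = 0%nat.
Proof.
  intros Hc. unfold add_step.
  rewrite (count_step_lt n c (all_steps_lt m n c Hc)), outdeg_lt; [reflexivity |].
  intros c' Hc' p Hp.
  destruct (hist_prob_pos_steps m h Hpos c' Hc') as [_ Hlt]. specialize (Hlt p Hp). unfold n. lia.
Qed.

Lemma total_weight_history : total_weight (outdeg h) n = INR n + INR m * (INR n - 1).
Proof.
  rewrite (total_weight_outdeg m).
  - unfold n. rewrite S_INR. ring.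
  - intros c Hc. destruct (hist_prob_pos_steps m h Hpos c Hc) as [Hlen Hlt].
    split; [exact Hlen |]. intros p Hp. specialize (Hlt p Hp). unfold n. lia.
Qed.

Lemma cond_exp_W_of : cond_exp m h W_of = A11 (INR m) (INR n) * W_of h + 1.
Proof.
  assert (Hm1 : 1 <= INR m) by (apply (le_INR 1); lia).
  assert (Hn2 : 2 <= INR n) by (apply (le_INR 2); unfold n; lia).
  pose proof total_weight_history as HT.
  assert (HT2 : 2 < total_weight (outdeg h) n) by (rewrite HT; nra).
  rewrite (cond_exp_mean_after m h 1 1 W_of (zeros n)).
  - fold n. rewrite (mean_after_zeros m n _ (Nat.lt_0_succ _) HT2), HT, W_of_zeros.
    fold n. unfold A11. field. nra.
  - intros c Hc. rewrite W_of_zeros, length_app, Nat.add_1_r, outdeg_app_step.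
    unfold zeros. rewrite sumR_seq_S. fold n.
    rewrite (add_step_new_node c Hc). simpl. ring.
Qed.

Lemma cond_exp_B_of :
  cond_exp m h B_of = A21 (INR m) (INR n) * W_of h + A22 (INR m) (INR n) * B_of h.
Proof.
  assert (Hm1 : 1 <= INR m) by (apply (le_INR 1); lia).
  assert (Hn2 : 2 <= INR n) by (apply (le_INR 2); unfold n; lia).
  pose proof total_weight_history as HT.
  assert (HT2 : 2 < total_weight (outdeg h) n) by (rewrite HT; nra).
  rewrite (cond_exp_mean_after m h 2 0 B_of (ones n)).
  - fold n. rewrite (mean_after_ones m n _ (Nat.lt_0_succ _) HT2), HT, W_of_zeros, B_of_ones.
    fold n.
    unfold A21, A22. field. nra.
  - intros c Hc. rewrite B_of_ones, length_app, Nat.add_1_r, outdeg_app_step.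
    unfold ones. rewrite sumR_seq_S. fold n.
    rewrite (add_step_new_node c Hc). simpl. ring.
Qed.

End OneInsertion.

Theorem lemma1 (m n : nat) (h : list (list nat)) :
  (2 <= m)%nat -> (3 <= n)%nat ->
  length h = (n - 1)%nat -> 0 < hist_prob m h ->
  cond_exp m h (M1 m n) = M1 m (n - 1) h /\
  cond_exp m h (M2 m n) = M2 m (n - 1) h.
Proof.
  intros Hm Hn Hlen Hpos.
  (* [lia] treats [@length (list nat) h] and [@length step h] as different atoms. *)
  change (length (h : history) = (n - 1)%nat) in Hlen.
  assert (HW := cond_exp_W_of m h ltac:(lia) ltac:(lia) Hpos).
  assert (HB := cond_exp_B_of m h ltac:(lia) ltac:(lia) Hpos).
  replace (S (length (h : history))) with n in HW, HB by lia.
  assert (Hm1 : 1 <= INR m) by (apply (le_INR 1); lia).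
  assert (Hn1 : 1 < INR n) by (apply (lt_INR 1); lia).
  destruct (martingale_coefficients_M1 (INR m) (INR n) ltac:(lra) Hn1) as [E11 E1].
  destruct (martingale_coefficients_M2 (INR m) (INR n) Hm1 Hn1) as [E21 [E22 E2]].
  rewrite M1_eq, M2_eq, minus_INR by lia. change (INR 1) with 1.
  split.
  - replace (M1 m n) with (fun h' => coef11 (INR m) (INR n) * W_of h' + 0 * B_of h'
                                     + shift1 (INR m) (INR n))
      by (extensionality h'; rewrite M1_eq; ring).
    rewrite cond_exp_affine, HW, <- E11, <- E1. ring.
  - change (M2 m n) with (fun h' => coef21 (INR m) (INR n) * W_of h'
                                    + coef22 (INR m) (INR n) * B_of h' + shift2 (INR m) (INR n)).
    rewrite cond_exp_affine, HW, HB, <- E21, <- E22, <- E2. ring.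
Qed.
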